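(* Let $V$ be a finite-dimensional complex vector space with a Hermitian inner product and norm $\|\cdot\|$, let $\mathbf G$ be a finite group of unitary transformations of $V$, let $\mathbf x_0\in V$ with $\|\mathbf x_0\|=1$, fix a subgroup sequence $\{I\}=\mathbf G_0<\mathbf G_1<\cdots<\mathbf G_m=\mathbf G$ and coset leader sets $\operatorname{CL}(\mathbf G_k/\mathbf G_{k-1})$, $1\le k\le m$. If every set $\operatorname{CL}(\mathbf G_k/\mathbf G_{k-1})$ is greed compatible, then the subgroup decoding algorithm decodes robustly (and thus also correctly with some noise).
   Context: $S=\operatorname{Stab}_{\mathbf G}(\mathbf x_0)$; for a subgroup $H$, $\operatorname{Stab}_H(\mathbf x_0)=H\cap S$. Codewords are $g^{-1}\mathbf x_0$, $g\in\mathbf G$. $\operatorname{CL}(\mathbf G_k/\mathbf G_{k-1})$ is a set of representatives of the left cosets of $\mathbf G_{k-1}$ in $\mathbf G_k$ containing $I$. Subgroup decoding algorithm: given $\mathbf r\in V$, set $\mathbf r_0=\mathbf r$; for $k=1,\dots,m$ choose $d_k\in\operatorname{CL}(\mathbf G_k/\mathbf G_{k-1})$ minimizing $\|a\mathbf r_{k-1}-\mathbf x_0\|$ over $a\in\operatorname{CL}(\mathbf G_k/\mathbf G_{k-1})$ (ties broken by a fixed ordering), set $\mathbf r_k=d_k\mathbf r_{k-1}$; output $g'=d_m\cdots d_1$. It decodes robustly if for every $g\in\mathbf G$ and $\mathbf r\in V$ with $\|\mathbf r-g^{-1}\mathbf x_0\|<\|\mathbf r-h^{-1}\mathbf x_0\|$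 for all $h\notin Sg$, the output lies in $Sg$. It decodes correctly with some noise if there is $\delta>0$ such that $\|\mathbf r-g^{-1}\mathbf x_0\|<\delta$ implies the output lies in $Sg$. Fundamental region of a subgroup $H$: $\operatorname{FR}(H)=\{\mathbf x:\|\mathbf x-\mathbf x_0\|<\|h\mathbf x-\mathbf x_0\|\ \forall h\in H\setminus\operatorname{Stab}_H(\mathbf x_0)\}$. For subgroups $H\le K$, a set $\operatorname{CL}$ of left coset representatives of $H$ in $K$ is greed compatible if for every $\mathbf x\in\operatorname{FR}(H)$ there is $c\in\operatorname{CL}$ with $c\mathbf x\in\operatorname{FR}(K)$. *)

From HB Require Import structures.
From mathcomp Require Import all_boot all_order all_algebra all_fingroup.
Set Implicit Arguments. Unset Strict Implicit. Unset Printing Implicit Defensive.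
Import Order.TTheory GRing.Theory Num.Theory.
Local Open Scope ring_scope.

Section Decoding.
Variable C : numClosedFieldType.
Variable n : nat.
Local Notation V := 'cV[C]_n.

Definition vnorm (x : V) : C := sqrtC (\sum_i `|x i 0| ^+ 2).

Definition adjmx (A : 'M[C]_n) : 'M[C]_n := (map_mx Num.conj A)^T.
Definition unitary (A : 'M[C]_n) : Prop := adjmx A *m A = 1%:M.

Variable gT : finGroupType.
Variable rho : gT -> 'M[C]_n.   (* the group elements act as unitary matrices *)
Variable x0 : V.

Definition Stab (G : {set gT}) : {set gT} := [set g in G | rho g *m x0 == x0].

Definition FR (G H : {set gT}) (x : V) : Prop :=
  forall h, h \in H -> h \notin (H :&: Stab G) ->
    vnorm (x - x0) < vnorm (rho h *m x - x0).

(* CL is a set of representatives of the left cosets of H in K containing 1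
   (as a list, whose order is the fixed tie-breaking order). *)
Definition is_coset_leaders (H K : {set gT}) (CL : seq gT) : Prop :=
  [/\ {subset CL <= K}, (1%g \in CL) &
      forall x, x \in K -> count (fun c => c \in (x *: H)%g) CL = 1%N].

Definition greed_compatible (G H K : {set gT}) (CL : seq gT) : Prop :=
  forall x, FR G H x -> exists2 c, c \in CL & FR G K (rho c *m x).

Definition argmin_first (f : gT -> C) (s : seq gT) : gT :=
  match s with
  | [::] => 1%g
  | a :: s' => foldl (fun b c => if f c < f b then c else b) a s'
  end.

Definition decode (m : nat) (CL : nat -> seq gT) (r : V) : gT :=
  (foldl (fun (p : V * gT) k =>
            let d := argmin_first (fun a => vnorm (rho a *m p.1 - x0)) (CL k) in
            (rho d *m p.1, (d * p.2)%g))
         (r, 1%g) (iota 1 m)).2.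

Definition decodes_robustly (G : {set gT}) (m : nat) (CL : nat -> seq gT) : Prop :=
  forall g r, g \in G ->
    (forall h, h \in G -> h \notin (Stab G :* g)%g ->
       vnorm (r - rho (g^-1)%g *m x0) < vnorm (r - rho (h^-1)%g *m x0)) ->
    decode m CL r \in (Stab G :* g)%g.

Definition decodes_with_noise (G : {set gT}) (m : nat) (CL : nat -> seq gT) : Prop :=
  exists2 delta : C, 0 < delta &
    forall g r, g \in G -> vnorm (r - rho (g^-1)%g *m x0) < delta ->
      decode m CL r \in (Stab G :* g)%g.

End Decoding.

(* Greed compatibility makes every stage of the decoder keep the current
   word r_k in the fundamental region FR(G_k): if some leader c moves it into
   FR(G_k), the greedy leader d does no worse, which forces d c^-1 into the
   stabilizer of x0, and stabilizer elements map FR(G_k) to itself.  After m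
   stages r_m = g' r lies in FR(G), i.e. x0 is the unique closest codeword to
   r_m, so g' is the decoded group element up to the stabilizer.  Correct
   decoding with noise follows from robustness since distinct codewords are
   separated by a positive distance in some coordinate. *)
From HB Require Import structures.
From mathcomp Require Import all_boot all_order all_algebra all_fingroup.
Import Order.TTheory GRing.Theory Num.Theory.
Local Open Scope ring_scope.
Set Implicit Arguments. Unset Strict Implicit.

Section HermitianNorm.
Variables (C : numClosedFieldType) (n : nat).
Local Notation V := 'cV[C]_n.

Lemma vnorm_ge0 (x : V) : 0 <= vnorm x.
Proof. by rewrite sqrtC_ge0 sumr_ge0 // => i _; rewrite exprn_ge0. Qed.

Lemma sum_normCK_adjmx (x : V) :
  \sum_i `|x i 0| ^+ 2 = ((map_mx Num.conj x)^T *m x) 0 0.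
Proof. by rewrite mxE; apply: eq_bigr => i _; rewrite !mxE normCK mulrC. Qed.

Lemma vnorm_unitary (U : 'M[C]_n) (x : V) : unitary U -> vnorm (U *m x) = vnorm x.
Proof.
rewrite /vnorm !sum_normCK_adjmx map_mxM trmx_mul -mulmxA (mulmxA _ U).
by rewrite /unitary /adjmx => ->; rewrite mul1mx.
Qed.

Lemma norm_coord_le_vnorm (x : V) j : `|x j 0| <= vnorm x.
Proof.
have sq_ge0 i : 0 <= `|x i 0| ^+ 2 by rewrite exprn_ge0.
rewrite -(sqrCK (normr_ge0 (x j 0))) ler_sqrtC ?qualifE /= ?sumr_ge0 //.
by rewrite (bigD1 j) //= lerDl sumr_ge0.
Qed.

Lemma exists_coord_neq0 (x : V) : x != 0 -> exists j, x j 0 != 0.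
Proof.
case: (pickP (fun j => x j 0 != 0)) => [j xj|x_0]; first by exists j.
suff -> : x = 0 by rewrite eqxx.
by apply/matrixP => i k; rewrite ord1 mxE; apply/eqP/negbFE/x_0.
Qed.

Lemma vnorm_lt_addr (e v : V) j (d : C) :
  d <= `|v j 0| -> vnorm e < d / 2 -> vnorm e < vnorm (e + v).
Proof.
move=> dv ed; apply: lt_le_trans (norm_coord_le_vnorm _ j).
rewrite mxE addrC; apply: lt_le_trans (lerB_normD _ _).
apply: lt_le_trans (lerB dv (norm_coord_le_vnorm e j)).
by rewrite ltrBrDr [d]splitr ltrD.
Qed.

End HermitianNorm.

Lemma exists_pos_lower_bound (R : numDomainType) (s : seq R) :
  exists2 d : R, 0 < d & forall a, a \in s -> 0 < a -> d <= a.
Proof.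
elim: s => [|a s [d d0 hd]]; first by exists 1.
have [a0|a_le0] := boolP (0 < a); last first.
  exists d => // b; rewrite inE => /predU1P[-> a_gt0|]; last exact: hd.
  by rewrite a_gt0 in a_le0.
have [da|ad] := real_leP (gtr0_real d0) (gtr0_real a0).
  by exists d => // b; rewrite inE => /predU1P[->|]; [|exact: hd].
exists a => // b; rewrite inE => /predU1P[-> _ //|bs b0].
exact: le_trans (ltW ad) (hd b bs b0).
Qed.

Section ArgminFirst.
Variables (C : numClosedFieldType) (T : eqType) (f : T -> C).
Hypothesis f_real : forall x, f x \is Num.real.

Lemma foldl_argmin_spec (s : seq T) b :
  let r := foldl (fun b c => if f c < f b then c else b) b s in
  [/\ r \in b :: s, f r <= f b & forall a, a \in s -> f r <= f a].
Proof.
elim: s b => [|c s IH] b /=; first by rewrite mem_head lexx.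
set b' := if f c < f b then c else b.
have [b'b b'c] : f b' <= f b /\ f b' <= f c.
  rewrite /b'; case: ifP => [/ltW -> //|/negbT cb]; split=> //.
  by rewrite real_leNgt.
have [r_in rb' r_min] := IH b'; split.
- move: r_in; rewrite !inE /b' => /predU1P[->|->]; last by rewrite !orbT.
  by case: ifP; rewrite eqxx ?orbT.
- exact: le_trans rb' b'b.
- by move=> a; rewrite inE => /predU1P[->|/r_min //]; apply: le_trans rb' b'c.
Qed.

End ArgminFirst.

Lemma argmin_first_spec (C : numClosedFieldType) (gT : finGroupType)
    (f : gT -> C) (s : seq gT) c :
  (forall x, f x \is Num.real) -> c \in s ->
  argmin_first f s \in s /\ forall a, a \in s -> f (argmin_first f s) <= f a.
Proof.
case: s => [//|b s] f_real _ /=.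
have [r_in rb r_min] := foldl_argmin_spec f_real s b.
by split=> // a; rewrite inE => /predU1P[->|/r_min].
Qed.

Lemma chain_subset_last (gT : finGroupType) (m : nat) (Gs : nat -> {group gT}) :
  (forall k, (1 <= k <= m)%N -> Gs k.-1 \subset Gs k) ->
  forall k, (k <= m)%N -> Gs k \subset Gs m.
Proof.
move=> Gs_sub k km.
have Gs_add d : (k + d <= m)%N -> Gs k \subset Gs (k + d)%N.
  elim: d => [|d IH]; first by rewrite addn0.
  rewrite addnS => km'; apply: subset_trans (IH (ltnW km')) _.
  by apply: (Gs_sub (k + d).+1); rewrite km'.
by rewrite -(subnKC km) Gs_add ?subnKC.
Qed.

Section Representation.
Variables (C : numClosedFieldType) (n : nat) (gT : finGroupType).
Variables (G : {group gT}) (rho : gT -> 'M[C]_n) (x0 : 'cV[C]_n).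
Hypothesis rho1 : rho 1%g = 1%:M.
Hypothesis rhoM : {in G &, forall x y, rho (x * y)%g = rho x *m rho y}.
Hypothesis rhoU : forall g, g \in G -> unitary (rho g).
Local Notation V := 'cV[C]_n.
Local Notation S := (Stab rho x0 G).

Lemma rhoVK a : a \in G -> rho a^-1%g *m rho a = 1%:M.
Proof. by move=> aG; rewrite -rhoM ?groupV // mulVg. Qed.

Lemma rhoKV a : a \in G -> rho a *m rho a^-1%g = 1%:M.
Proof. by move=> aG; rewrite -rhoM ?groupV // mulgV. Qed.

Lemma vnorm_rho g (x : V) : g \in G -> vnorm (rho g *m x) = vnorm x.
Proof. by move=> gG; apply/vnorm_unitary/rhoU. Qed.

Lemma stabP g : reflect (g \in G /\ rho g *m x0 = x0) (g \in S).
Proof. by rewrite inE; apply: (iffP andP) => -[? /eqP]. Qed.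

Lemma stabM : {in S &, forall s t, (s * t)%g \in S}.
Proof.
move=> s t /stabP[sG sx] /stabP[tG tx]; apply/stabP.
by rewrite groupM // rhoM // -mulmxA tx sx.
Qed.

Lemma stabV : {in S, forall s, (s^-1)%g \in S}.
Proof.
move=> s /stabP[sG sx]; apply/stabP.
by rewrite groupV -{1}sx mulmxA rhoVK // mul1mx.
Qed.

Lemma mulgV_notin_stab g h :
  h \notin (S :* g)%g -> (g * h^-1)%g \notin S.
Proof.
by rewrite mem_rcoset; apply: contra => /stabV; rewrite invMg invgK.
Qed.

Lemma vnorm_sub_rhoV a (r : V) :
  a \in G -> vnorm (r - rho a^-1%g *m x0) = vnorm (rho a *m r - x0).
Proof.
by move=> aG; rewrite -(vnorm_rho _ aG) mulmxBr mulmxA rhoKV // mul1mx.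
Qed.

Definition greedy_leader (CL : seq gT) (x : V) : gT :=
  argmin_first (fun a => vnorm (rho a *m x - x0)) CL.

Section FundamentalRegion.
Variable K : {group gT}.
Hypothesis sKG : K \subset G.

Let inG y : y \in K -> y \in G := subsetP sKG y.

Lemma FR_nearest (y : V) t :
  FR rho x0 G K y -> t \in K -> t \notin S ->
  vnorm (y - x0) < vnorm (rho t *m y - x0).
Proof. by move=> yFR tK tS; apply: yFR; rewrite // inE tK. Qed.

Lemma FR_stab_translate (y : V) t :
  FR rho x0 G K y -> t \in K -> t \in S -> FR rho x0 G K (rho t *m y).
Proof.
move=> yFR tK tS; have /stabP[_ tx0] := tS.
have ty_x0 : vnorm (rho t *m y - x0) = vnorm (y - x0).
  by rewrite -[in LHS]tx0 -mulmxBr vnorm_rho ?inG.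
move=> h hK hS; rewrite ty_x0.
have htS : (h * t)%g \notin S.
  apply: contra hS => /stabM/(_ (stabV tS)); rewrite mulgK => hS.
  by rewrite inE hK.
by rewrite mulmxA -rhoM ?inG //; apply: FR_nearest; rewrite ?groupM.
Qed.

(* The greedy leader d satisfies |d x - x0| <= |c x - x0|, so by
   minimality of c x in FR(K) the element d c^-1 must fix x0. *)
Lemma FR_greedy_leader (CL : seq gT) c (x : V) :
  {subset CL <= K} -> c \in CL -> FR rho x0 G K (rho c *m x) ->
  greedy_leader CL x \in CL /\ FR rho x0 G K (rho (greedy_leader CL x) *m x).
Proof.
move=> sCL cCL cFR; set d := greedy_leader CL x.
have [dCL d_min] :=
  argmin_first_spec (fun a => ger0_real (vnorm_ge0 (rho a *m x - x0))) cCL.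
have [cK dK] := (sCL c cCL, sCL d dCL).
have tK : (d * c^-1)%g \in K by rewrite groupM ?groupV.
have rho_t : rho (d * c^-1)%g *m (rho c *m x) = rho d *m x.
  by rewrite mulmxA -rhoM ?inG ?groupV // mulgKV.
have tS : (d * c^-1)%g \in S.
  apply: contraT => tS; have := FR_nearest cFR tK tS.
  by rewrite rho_t => /lt_le_trans/(_ (d_min c cCL)); rewrite ltxx.
by split; rewrite // -rho_t; apply: FR_stab_translate.
Qed.

End FundamentalRegion.

Definition decode_state (CL : nat -> seq gT) (r : V) (j : nat) : V * gT :=
  foldl (fun p k => let d := greedy_leader (CL k) p.1 in (rho d *m p.1, (d * p.2)%g))
        (r, 1%g) (iota 1 j).

Lemma decode_stateS CL r j :
  decode_state CL r j.+1 =
  let p := decode_state CL r j in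
  let d := greedy_leader (CL j.+1) p.1 in (rho d *m p.1, (d * p.2)%g).
Proof. by rewrite /decode_state -[X in iota _ X]addn1 iotaD foldl_cat add1n. Qed.

Lemma FR_trivial_group (y : V) (H : {group gT}) : H :=: 1%g -> FR rho x0 G H y.
Proof.
move=> -> h /set1P-> /negP[]; rewrite inE group1.
by apply/stabP; rewrite group1 rho1 mul1mx.
Qed.

Section Chain.
Variables (m : nat) (Gs : nat -> {group gT}) (CL : nat -> seq gT).
Hypothesis Gs0 : Gs 0%N :=: 1%g.
Hypothesis Gsm : Gs m = G.
Hypothesis Gs_sub : forall k, (1 <= k <= m)%N -> Gs k.-1 \subset Gs k.
Hypothesis CL_leaders :
  forall k, (1 <= k <= m)%N -> is_coset_leaders (Gs k.-1) (Gs k) (CL k).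
Hypothesis CL_greedy :
  forall k, (1 <= k <= m)%N -> greed_compatible rho x0 G (Gs k.-1) (Gs k) (CL k).

Lemma decode_state_inv r j : (j <= m)%N ->
  let p := decode_state CL r j in
  [/\ p.2 \in G, p.1 = rho p.2 *m r & FR rho x0 G (Gs j) p.1].
Proof.
elim: j => [|j IH] jm.
  by split; [exact: group1 | rewrite /= rho1 mul1mx | exact: FR_trivial_group].
have [p2G p1E pFR] := IH (ltnW jm).
rewrite decode_stateS /=; set p := decode_state CL r j in p2G p1E pFR *.
have k1 : (1 <= j.+1 <= m)%N by rewrite jm.
have [sCL _ _] := CL_leaders k1.
have sKG : Gs j.+1 \subset G by rewrite -Gsm chain_subset_last.
have [c cCL cFR] := CL_greedy k1 pFR.
have [dCL dFR] := FR_greedy_leader sKG sCL cCL cFR.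
set d := greedy_leader _ _ in dCL dFR *.
have dG : d \in G by apply/(subsetP sKG)/sCL.
by rewrite groupM // [in LHS]p1E mulmxA rhoM.
Qed.

Lemma greed_compatible_decodes_robustly : decodes_robustly rho x0 G m CL.
Proof.
move=> g r gG r_near; have [p2G p1E pFR] := decode_state_inv r (leqnn m).
rewrite Gsm in pFR; change (decode rho x0 m CL r) with (decode_state CL r m).2.
set p := decode_state CL r m in p2G p1E pFR *; apply: contraT => p2S.
have gpG : (g * p.2^-1)%g \in G by rewrite groupM ?groupV.
have := r_near _ p2G p2S; rewrite !vnorm_sub_rhoV // -p1E.
have := FR_nearest pFR gpG (mulgV_notin_stab p2S).
rewrite p1E mulmxA -rhoM ?groupV // mulgKV -p1E.
by move=> /lt_trans hlt /hlt; rewrite ltxx.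
Qed.

End Chain.

(* The separation constant: every codeword other than x0 differs from x0 by at
   least d in some coordinate. *)
Lemma decodes_robustly_with_noise m CL :
  decodes_robustly rho x0 G m CL -> decodes_with_noise rho x0 G m CL.
Proof.
move=> robust.
have [d d0 d_min] := exists_pos_lower_bound
  [seq `|(x0 - rho k *m x0) j 0| | k <- enum G, j <- enum 'I_n].
exists (d / 2); first by rewrite divr_gt0.
move=> g r gG r_close; apply: robust => // h hG gh_notS.
have kG : (g * h^-1)%g \in G by rewrite groupM ?groupV.
have kS := mulgV_notin_stab gh_notS.
have [j dj] : exists j, (x0 - rho (g * h^-1)%g *m x0) j 0 != 0.
  apply: exists_coord_neq0; rewrite subr_eq0 eq_sym.
  by apply: contra kS => /eqP kx0; apply/stabP.
rewrite vnorm_sub_rhoV // in r_close; rewrite vnorm_sub_rhoV //.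
rewrite -[X in _ < X](vnorm_rho _ gG) mulmxBr mulmxA -rhoM ?groupV //.
have -> : rho g *m r - rho (g * h^-1)%g *m x0
          = (rho g *m r - x0) + (x0 - rho (g * h^-1)%g *m x0).
  by rewrite addrA subrK.
apply: (vnorm_lt_addr (j := j) _ r_close); apply: d_min; last by rewrite normr_gt0.
by apply: allpairs_f; rewrite mem_enum.
Qed.

End Representation.

Theorem theoremB (C : numClosedFieldType) (n : nat) (gT : finGroupType)
  (G : {group gT}) (rho : gT -> 'M[C]_n) (x0 : 'cV[C]_n)
  (m : nat) (Gs : nat -> {group gT}) (CL : nat -> seq gT) :
  rho 1%g = 1%:M ->
  {in G &, forall x y, rho (x * y)%g = rho x *m rho y} ->
  {in G &, injective rho} ->
  (forall g, g \in G -> unitary (rho g)) ->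
  vnorm x0 = 1 ->
  (Gs 0%N :=: 1%g) -> Gs m = G ->
  (forall k, (1 <= k <= m)%N -> Gs k.-1 \subset Gs k) ->
  (forall k, (1 <= k <= m)%N -> is_coset_leaders (Gs k.-1) (Gs k) (CL k)) ->
  (forall k, (1 <= k <= m)%N ->
     greed_compatible rho x0 G (Gs k.-1) (Gs k) (CL k)) ->
  decodes_robustly rho x0 G m CL /\ decodes_with_noise rho x0 G m CL.
Proof.
move=> rho1 rhoM _ rhoU _ Gs0 Gsm Gs_sub CL_leaders CL_greedy.
have robust := greed_compatible_decodes_robustly rho1 rhoM rhoU Gs0 Gsm Gs_sub
                 CL_leaders CL_greedy.
by split; last exact: decodes_robustly_with_noise.
Qed.
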